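(* Let $t,\Delta,\omega\ge 2$ be integers and write $\Delta=a(\omega-1)+b$ with integers $a\ge0$ and $0\le b<\omega-1$. Then \[ f_t(\Delta,\omega)\ \le\ \frac1t\,k_{t-1}\big(T(\Delta,\omega-1)\big)=\frac1t\sum_{k=0}^{b}\binom{b}{k}\binom{\omega-1-b}{t-1-k}(a+1)^k a^{t-1-k} \] (with the convention $0^0=1$).
   Context: $\mathcal{G}(\Delta,\omega)$ denotes the class of finite simple graphs $G$ with maximum degree $\Delta(G)\le\Delta$ and clique number $\omega(G)\le\omega$. $k_t(G)$ is the number of copies of $K_t$ in $G$ and $\rho_t(G)=k_t(G)/|V(G)|$. $f_t(\Delta,\omega)=\sup\{\rho_t(G): G\in\mathcal{G}(\Delta,\omega),\ |V(G)|\ge 1\}$. $T(n,r)$ denotes the $r$-partite Turán graph on $n$ vertices: the complete $r$-partite graph on $n$ vertices whose part sizes are all $\lfloor n/r\rfloor$ or $\lceil n/r\rceil$ (when $n<r$ this is $K_n$). *)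

From HB Require Import structures.
From mathcomp Require Import all_boot all_order all_algebra.
Set Implicit Arguments. Unset Strict Implicit. Unset Printing Implicit Defensive.

Definition simple_graph (V : finType) (e : rel V) : Prop :=
  symmetric e /\ irreflexive e.

Definition is_clique (V : finType) (e : rel V) (S : {set V}) : bool :=
  [forall x in S, forall y in S, (x != y) ==> e x y].

Definition degree (V : finType) (e : rel V) (x : V) : nat := #|[set y | e x y]|.

Definition maxdeg_le (V : finType) (e : rel V) (D : nat) : Prop :=
  forall x : V, degree e x <= D.

Definition clique_num_le (V : finType) (e : rel V) (w : nat) : Prop :=
  forall S : {set V}, is_clique e S -> #|S| <= w.

Definition kcount (V : finType) (e : rel V) (t : nat) : nat :=
  #|[set S : {set V} | (#|S| == t) && is_clique e S]|.

Definition rho (V : finType) (e : rel V) (t : nat) : rat :=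
  ((kcount e t)%:R / #|V|%:R)%R.

(* Turan graph T(n,r): vertex set 'I_n, parts = residue classes mod r
   (r parts of sizes floor(n/r) or ceil(n/r)); complete r-partite. *)
Definition turan_rel (n r : nat) : rel 'I_n :=
  fun i j => (i %% r) != (j %% r).
Arguments turan_rel : clear implicits.

From HB Require Import structures.
From mathcomp Require Import all_boot all_order all_algebra.
From mathcomp Require Import zify.
Set Implicit Arguments. Unset Strict Implicit. Unset Printing Implicit Defensive.

(* Double counting pairs (v, K), K a t-clique containing v, gives
   t k_t(G) <= sum_v k_{t-1}(G[N(v)]).  Each neighbourhood has at most Delta
   vertices and clique number at most omega - 1, so by induction on
   the clique number it has at most as many (t-1)-cliques as the Turán graph on
   as many vertices with omega - 1 parts, i.e. e_{t-1} of the balanced part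
   sizes.  Moving units between parts shows that e_{t-1} of the balanced
   partition only grows with the number of vertices, whence the bound
   k_{t-1}(T(Delta, omega - 1)); the closed form is e_{t-1} of b parts of
   size a + 1 and omega - 1 - b parts of size a. *)

(* [elem_sym l s] is the elementary symmetric polynomial e_s evaluated at the
   entries of l; it counts the K_s in the complete multipartite graph with
   part sizes l. *)
Fixpoint elem_sym (l : seq nat) (s : nat) : nat :=
  match l with
  | [::] => s == 0
  | x :: l' => if s is s'.+1 then elem_sym l' s'.+1 + x * elem_sym l' s' else 1
  end.

Lemma elem_sym0 l : elem_sym l 0 = 1.
Proof. by case: l. Qed.

Lemma elem_sym_pair x y l s :
  elem_sym [:: x, y & l] s.+2 =
    elem_sym l s.+2 + (x + y) * elem_sym l s.+1 + x * y * elem_sym l s.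
Proof. rewrite /=; nia. Qed.

Lemma elem_sym_swap x y l s : elem_sym [:: x, y & l] s = elem_sym [:: y, x & l] s.
Proof. by case: s => [|[|s]]; rewrite ?elem_sym_pair /= ?elem_sym0; nia. Qed.

Lemma eq_elem_sym_cons x l l' :
  elem_sym l =1 elem_sym l' -> elem_sym (x :: l) =1 elem_sym (x :: l').
Proof. by move=> E [|s] //=; rewrite !E. Qed.

Lemma elem_sym_perm l l' : perm_eq l l' -> elem_sym l =1 elem_sym l'.
Proof.
elim: l l' => [|x l IH] l'; first by move=> /perm_size; case: l'.
move=> pll'; have x_l' : x \in l' by rewrite -(perm_mem pll') mem_head.
move: pll'; case/splitPr: x_l' => l1 l2 pll'.
have {}pll' : perm_eq l (l1 ++ l2).
  by rewrite -(perm_cons x) (perm_trans pll') // -cat1s perm_catCA.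
have move_x : elem_sym (l1 ++ x :: l2) =1 elem_sym (x :: l1 ++ l2).
  elim: l1 {pll'} => [|y l1 IH1] // s.
  by rewrite cat_cons (eq_elem_sym_cons y IH1) elem_sym_swap.
by move=> s; rewrite move_x; apply/eq_elem_sym_cons/IH.
Qed.

Lemma elem_sym_pair_le x y x' y' l s : x + y = x' + y' -> x * y <= x' * y' ->
  elem_sym [:: x, y & l] s <= elem_sym [:: x', y' & l] s.
Proof.
move=> Esum Eprod; case: s => [|[|s]]; rewrite ?elem_sym0 //.
  by rewrite /= !elem_sym0; lia.
by rewrite !elem_sym_pair Esum leq_add2l leq_mul2r Eprod orbT.
Qed.

Lemma elem_sym_head_mono x y l s : x <= y -> elem_sym (x :: l) s <= elem_sym (y :: l) s.
Proof. by move=> le_xy; case: s => //= s; rewrite leq_add2l leq_mul2r le_xy orbT. Qed.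

Lemma elem_sym_cat l1 l2 s :
  elem_sym (l1 ++ l2) s = \sum_(k < s.+1) elem_sym l1 k * elem_sym l2 (s - k).
Proof.
elim: l1 s => [|x l1 IH] s.
  by rewrite big_ord_recl /= mul1n subn0 big1 ?addn0.
case: s => [|s]; first by rewrite big_ord1 /= !elem_sym0.
rewrite cat_cons /= !IH [in RHS]big_ord_recl [X in X + _ = _]big_ord_recl /=.
rewrite !elem_sym0 !mul1n !subn0 -addnA; congr (_ + _).
rewrite big_distrr -big_split /=; apply: eq_bigr => i _.
by rewrite /bump /= add1n subSS mulnDl mulnA.
Qed.

Lemma elem_sym_nseq m x s : elem_sym (nseq m x) s = 'C(m, s) * x ^ s.
Proof.
elim: m s => [|m IH] [|s] //=.
by rewrite !IH binS expnS mulnDl; congr (_ + _); rewrite mulnCA mulnA.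
Qed.

Definition balanced_parts (N R : nat) : seq nat :=
  nseq (N %% R) (N %/ R).+1 ++ nseq (R - N %% R) (N %/ R).

Lemma size_balanced_parts N R : 0 < R -> size (balanced_parts N R) = R.
Proof. by move=> R_gt0; rewrite size_cat !size_nseq subnKC // ltnW // ltn_pmod. Qed.

Lemma sumn_balanced_parts N R : sumn (balanced_parts N R) = N.
Proof.
rewrite sumn_cat !sumn_nseq.
case: (posnP R) => [->|R_gt0]; first by rewrite modn0 divn0; lia.
by have := ltn_pmod N R_gt0; have := divn_eq N R; nia.
Qed.

Lemma perm_balanced_partsE a b R : 0 < R -> b <= R ->
  perm_eq (balanced_parts (a * R + b) R) (nseq b a.+1 ++ nseq (R - b) a).
Proof.
move=> R_gt0; rewrite leq_eqVlt => /orP[/eqP-> | b_lt_R].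
  by rewrite -mulSnr /balanced_parts modnMl mulnK // subn0 subnn cats0.
by rewrite /balanced_parts modnMDl divnMDl // modn_small // divn_small // addn0.
Qed.

Lemma perm_balanced_parts l : {in l &, forall x y, y <= x.+1} ->
  perm_eq l (balanced_parts (sumn l) (size l)).
Proof.
case: l => [|x0 l0] // near; set l := x0 :: l0 in near *.
have [lo lo_l lo_min] : exists2 lo, lo \in l & {in l, forall y, lo <= y}.
  have [lo lo_l lo_min] := ex_minnP (ex_intro (fun k => k \in l) x0 (mem_head _ _)).
  by exists lo => // y /lo_min.
set hi := [seq y <- l | y == lo.+1]; set low := [seq y <- l | y != lo.+1].
have l_hi_low : perm_eq l (hi ++ low) by rewrite perm_sym perm_filterC.
have hiE : hi = nseq (size hi) lo.+1 by apply/all_pred1P; rewrite filter_all.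
have lowE : low = nseq (size low) lo.
  apply/all_pred1P/allP => y; rewrite mem_filter => /andP[y_ne y_l] /=.
  by have := lo_min y y_l; have := near lo y lo_l y_l; move: y_ne; lia.
rewrite hiE lowE in l_hi_low.
rewrite (perm_sumn l_hi_low) (perm_size l_hi_low).
rewrite sumn_cat !sumn_nseq size_cat !size_nseq.
apply: (perm_trans l_hi_low); rewrite perm_sym.
have size_gt0 : 0 < size hi + size low.
  by have := perm_size l_hi_low; rewrite size_cat !size_nseq => <-.
rewrite (_ : _ + _ = lo * (size hi + size low) + size hi); last by nia.
by have := perm_balanced_partsE lo size_gt0 (leq_addr _ _); rewrite addKn.
Qed.

(* Replacing two entries x + 1 < y by x + 1 and y - 1 keeps the sum, increases
   every [elem_sym] and strictly decreases the sum of squares; a list admitting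
   no such move is balanced. *)
Lemma elem_sym_le_balanced l s :
  elem_sym l s <= elem_sym (balanced_parts (sumn l) (size l)) s.
Proof.
move: {2}(sumn [seq x * x | x <- l]).+1 (ltnSn (sumn [seq x * x | x <- l])) => n.
elim: n l => [|n IH] l //; rewrite ltnS => sq_l.
have [/hasP[x x_l /hasP[y y_l lt_xy]] | unmovable] :=
  boolP (has (fun x => has (fun y => x.+1 < y) l) l).
  have y_rem : y \in rem x l.
    by move: y_l; rewrite (perm_mem (perm_to_rem x_l)) inE gtn_eqF // ltnW.
  have l_xy : perm_eq l [:: x, y & rem y (rem x l)].
    by rewrite (perm_trans (perm_to_rem x_l)) // perm_cons perm_to_rem.
  set l' := [:: x.+1, y.-1 & rem y (rem x l)].
  have [-> ->] : sumn l = sumn l' /\ size l = size l'.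
    by rewrite (perm_sumn l_xy) (perm_size l_xy) /=; split => //; lia.
  apply: leq_trans (IH l' _); last first.
    by move: sq_l; rewrite (perm_sumn (perm_map _ l_xy)) /=; nia.
  by rewrite (elem_sym_perm l_xy); apply: elem_sym_pair_le; nia.
rewrite (elem_sym_perm (perm_balanced_parts _)) // => x y x_l y_l.
rewrite leqNgt; apply: contra unmovable => lt_xy.
by apply/hasP; exists x => //; apply/hasP; exists y.
Qed.

Lemma elem_sym_le_balanced_sumn_le l N s : 0 < size l -> sumn l <= N ->
  elem_sym l s <= elem_sym (balanced_parts N (size l)) s.
Proof.
case: l => [|x l] // _ le_sum_N.
apply: leq_trans (elem_sym_head_mono l s (leq_addr (N - sumn (x :: l)) x)) _.
have {2}-> : N = sumn (x + (N - sumn (x :: l)) :: l) by move: le_sum_N => /=; lia.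
exact: elem_sym_le_balanced.
Qed.

Lemma sum_card_setI (T : finType) (A : {set {set T}}) (P : {set T}) :
  \sum_(S in A) #|S :&: P| = \sum_(x in P) #|[set S in A | x \in S]|.
Proof.
have card_setI S : #|S :&: P| = \sum_(x in P) (x \in S).
  rewrite -sum1_card big_mkcond [RHS]big_mkcond; apply: eq_bigr => x _.
  by rewrite inE andbC; case: (_ \in _).
rewrite (eq_bigr _ (fun S _ => card_setI S)) exchange_big /=; apply: eq_bigr => x _.
rewrite -sum1_card big_mkcond [RHS]big_mkcond; apply: eq_bigr => S _.
by rewrite inE; case: (_ \in _).
Qed.

Section Cliques.
Variables (V : finType) (e : rel V).
Hypotheses (e_sym : symmetric e) (e_irr : irreflexive e).

Definition cliques_in (U : {set V}) (s : nat) : {set {set V}} :=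
  [set S : {set V} | [&& S \subset U, #|S| == s & is_clique e S]].

Definition cliques_through (U : {set V}) (s : nat) (v : V) : {set {set V}} :=
  [set S in cliques_in U s | v \in S].

Definition nbhd (v : V) : {set V} := [set y | e v y].

Definition clique_num_le_in (U : {set V}) (r : nat) : Prop :=
  forall S : {set V}, S \subset U -> is_clique e S -> #|S| <= r.

Lemma cliqueP (S : {set V}) :
  reflect {in S &, forall x y, x != y -> e x y} (is_clique e S).
Proof.
apply: (iffP forallP) => [cl_S x y x_S y_S | cl_S x].
  by have /implyP/(_ x_S)/forallP/(_ y)/implyP/(_ y_S)/implyP := cl_S x.
apply/implyP => x_S; apply/forallP => y; apply/implyP => y_S.
by apply/implyP; apply: cl_S.
Qed.

Lemma clique_subset (S T : {set V}) : S \subset T -> is_clique e T -> is_clique e S.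
Proof.
by move=> /subsetP sST /cliqueP cl_T; apply/cliqueP => x y /sST x_T /sST; apply: cl_T.
Qed.

Lemma clique_setU1 (v : V) (S : {set V}) :
  is_clique e S -> {in S, forall y, e v y} -> is_clique e (v |: S).
Proof.
move=> /cliqueP cl_S v_S; apply/cliqueP => x y; rewrite !inE.
case/orP=> [/eqP->|x_S]; case/orP=> [/eqP->|y_S]; rewrite ?eqxx //.
- by move=> _; apply: v_S.
- by move=> _; rewrite e_sym; apply: v_S.
- exact: cl_S.
Qed.

Lemma clique_set1 (x : V) : is_clique e [set x].
Proof. by apply/cliqueP => y z; rewrite !inE => /eqP-> /eqP->; rewrite eqxx. Qed.

Lemma card_cliques_in0 (U : {set V}) : #|cliques_in U 0| = 1.
Proof.
rewrite (_ : cliques_in U 0 = [set set0]) ?cards1 //.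
apply/setP => S; rewrite !inE cards_eq0; case: eqP => [->|_]; last by rewrite andbF.
by rewrite sub0set; apply/cliqueP => x y; rewrite inE.
Qed.

Lemma card_cliques_in_eq0 (U : {set V}) r s :
  clique_num_le_in U r -> r < s -> #|cliques_in U s| = 0.
Proof.
move=> U_r lt_rs; apply/eqP; rewrite cards_eq0; apply/eqP/setP => S; rewrite !inE.
by apply/negP => /and3P[S_U /eqP S_s cl_S]; have := U_r S S_U cl_S; lia.
Qed.

Lemma clique_num_le_in0 (U : {set V}) : clique_num_le_in U 0 -> U = set0.
Proof.
move=> U_0; apply/setP => x; rewrite inE; apply/negP => x_U.
by have := U_0 [set x]; rewrite sub1set x_U cards1 => /(_ isT (clique_set1 x)).
Qed.

Lemma clique_num_le_in_nbhd (U : {set V}) r v :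
  clique_num_le_in U r.+1 -> v \in U -> clique_num_le_in (U :&: nbhd v) r.
Proof.
move=> U_r v_U S S_N cl_S.
have v_S : v \notin S by apply/negP => /(subsetP S_N); rewrite !inE e_irr andbF.
have := U_r (v |: S); rewrite cardsU1 v_S add1n ltnS; apply.
  by rewrite subUset sub1set v_U (subset_trans S_N) ?subsetIl.
by apply: clique_setU1 => // y /(subsetP S_N); rewrite !inE => /andP[].
Qed.

Lemma card_cliques_through_le (U : {set V}) s v :
  #|cliques_through U s.+1 v| <= #|cliques_in (U :&: nbhd v) s|.
Proof.
have inj_D1 : {in cliques_through U s.+1 v &, injective (fun S => S :\ v)}.
  move=> S1 S2; rewrite !inE => /andP[_ v_S1] /andP[_ v_S2] E.
  by rewrite -(setD1K v_S1) -(setD1K v_S2) E.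
rewrite -(card_in_imset inj_D1); apply/subset_leq_card/subsetP => _ /imsetP[S + ->].
rewrite !inE => /andP[/and3P[S_U /eqP S_s cl_S] v_S]; apply/and3P; split.
- apply/subsetP => y; rewrite !inE => /andP[y_v y_S].
  by rewrite (subsetP S_U _ y_S); move/cliqueP: cl_S; apply; rewrite // eq_sym.
- by move: S_s; rewrite (cardsD1 v) v_S add1n => -[->].
- exact: clique_subset (subD1set _ _) cl_S.
Qed.

Lemma card_cliques_in_le_through (U W : {set V}) s :
  #|cliques_in U s| <= #|cliques_in W s| + \sum_(x in U :\: W) #|cliques_through U s x|.
Proof.
set A := cliques_in U s; set B := [set S : {set V} | S \subset W].
rewrite -(cardsID B A); apply: leq_add.
  apply/subset_leq_card/subsetP => S; rewrite !inE => /andP[/and3P[_ -> ->] ->].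
  by rewrite andbT.
apply: (@leq_trans (\sum_(S in A :\: B) #|S :&: (U :\: W)|)).
  rewrite -sum1_card; apply: leq_sum => S; rewrite !inE => /andP[S_W /and3P[S_U _ _]].
  case/subsetPn: S_W => x x_S x_W; rewrite card_gt0; apply/set0Pn; exists x.
  by rewrite !inE x_S x_W (subsetP S_U).
rewrite sum_card_setI; apply: leq_sum => x _.
by apply/subset_leq_card/subsetP => S; rewrite !inE => /andP[/andP[_ ->] ->].
Qed.

(* Induction on r, splitting U along the neighbourhood of a vertex v lying in
   the largest number of s-cliques: the non-neighbours contribute at most as
   much as a part of that size in a complete multipartite graph. *)
Lemma card_cliques_in_le_balanced r (U : {set V}) s :
  clique_num_le_in U r -> #|cliques_in U s| <= elem_sym (balanced_parts #|U| r) s.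
Proof.
elim: r U s => [|r IH] U [|s] U_r; rewrite ?card_cliques_in0 ?elem_sym0 //.
  by rewrite (card_cliques_in_eq0 U_r).
have [U0 | [u0 u0_U]] := set_0Vmem U.
  rewrite (@card_cliques_in_eq0 _ 0) // => S; rewrite U0 subset0 => /eqP-> _.
  by rewrite cards0.
case: (arg_maxnP (fun v => #|cliques_through U s.+1 v|) u0_U) => v v_U v_max.
set N := U :&: nbhd v; have N_r := clique_num_le_in_nbhd U_r v_U.
apply: (@leq_trans (elem_sym (#|U :\: N| :: balanced_parts #|N| r) s.+1)).
  apply: leq_trans (card_cliques_in_le_through U N s.+1) _; rewrite /= leq_add ?IH //.
  rewrite -sum_nat_const; apply: leq_sum => x x_UN.
  apply: leq_trans (v_max x _) _; first by move: x_UN; rewrite inE => /andP[].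
  exact: leq_trans (card_cliques_through_le U s v) (IH _ _ N_r).
have size_parts : size (balanced_parts #|N| r) = r.
  case: (posnP r) => [r0 | r_gt0]; last exact: size_balanced_parts.
  by move: N_r; rewrite r0 => /clique_num_le_in0; rewrite -/N => ->; rewrite cards0.
have sum_parts : sumn (#|U :\: N| :: balanced_parts #|N| r) = #|U|.
  by rewrite /= sumn_balanced_parts -(cardsID N U) setIA setIid addnC.
have := elem_sym_le_balanced (#|U :\: N| :: balanced_parts #|N| r) s.+1.
by rewrite sum_parts /= size_parts.
Qed.

Lemma card_cliques_in_join (U P : {set V}) s : P \subset U ->
  {in P &, forall x y, ~~ e x y} -> {in P & U :\: P, forall x y, e x y} ->
  #|cliques_in U s.+1| = #|cliques_in (U :\: P) s.+1| + #|P| * #|cliques_in (U :\: P) s|.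
Proof.
move=> P_U P_indep P_join.
set A := cliques_in U s.+1; set B := [set S : {set V} | S \subset U :\: P].
rewrite -(cardsID B A); congr (_ + _).
  apply: eq_card => S; rewrite !inE; apply/idP/idP => [/andP[/and3P[_ -> ->] ->] //|].
  by case/and3P => S_UP -> ->; rewrite S_UP (subset_trans S_UP) ?subsetDl.
have meet_P S : S \in A :\: B -> #|S :&: P| = 1.
  rewrite !inE => /andP[S_UP /and3P[S_U _ cl_S]]; case/subsetPn: S_UP => x x_S x_UP.
  have x_P : x \in P by move: x_UP; rewrite !inE (subsetP S_U _ x_S) andbT negbK.
  apply/eqP/cards1P; exists x; apply/setP => y; rewrite !inE.
  apply/andP/eqP => [[y_S y_P] | ->] //; apply/eqP/negPn/negP => y_x.
  by have := P_indep y x y_P x_P; rewrite (cliqueP _ cl_S y x y_S x_S y_x).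
rewrite -sum1_card (eq_bigr _ (fun S S_in => esym (meet_P S S_in))).
rewrite sum_card_setI -sum_nat_const; apply: eq_bigr => x x_P.
have x_U : x \in U := subsetP P_U x x_P.
have notin_UP T : T \in cliques_in (U :\: P) s -> x \notin T.
  by rewrite inE => /and3P[T_UP _ _]; apply/negP => /(subsetP T_UP); rewrite !inE x_P.
have inj_U1 : {in cliques_in (U :\: P) s &, injective (fun T => x |: T)}.
  move=> T1 T2 /notin_UP x_T1 /notin_UP x_T2 E.
  by rewrite -(setU1K x_T1) -(setU1K x_T2) E.
rewrite -(card_in_imset inj_U1); apply: eq_card => S; rewrite inE.
apply/idP/imsetP => [|[T T_in ->]].
  rewrite !inE => /andP[/andP[S_UP /and3P[S_U /eqP S_s cl_S]] x_S].
  exists (S :\ x); last by rewrite setD1K.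
  rewrite !inE; apply/and3P; split.
  - apply/subsetP => y; rewrite !inE => /andP[y_x y_S]; rewrite (subsetP S_U _ y_S) andbT.
    apply/negP => y_P; have := P_indep y x y_P x_P.
    by rewrite (cliqueP _ cl_S y x y_S x_S y_x).
  - by move: S_s; rewrite (cardsD1 x) x_S add1n => -[->].
  - exact: clique_subset (subD1set _ _) cl_S.
have x_T := notin_UP T T_in; move: T_in; rewrite !inE => /and3P[T_UP /eqP T_s cl_T].
rewrite eqxx andbT; apply/and4P; split.
- by apply/negP => /subsetP /(_ x (setU11 _ _)); rewrite !inE x_P.
- by rewrite subUset sub1set x_U (subset_trans T_UP) ?subsetDl.
- by rewrite cardsU1 x_T T_s.
- by apply: clique_setU1 => // y /(subsetP T_UP) y_UP; apply: P_join.
Qed.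

End Cliques.

Lemma kcountE (V : finType) (e : rel V) s : kcount e s = #|cliques_in e setT s|.
Proof. by apply: eq_card => S; rewrite !inE subsetT. Qed.

Lemma kcount_mul_le (V : finType) (e : rel V) D r s :
  simple_graph e -> maxdeg_le e D -> clique_num_le e r.+1 -> 0 < r ->
  kcount e s.+1 * s.+1 <= #|V| * elem_sym (balanced_parts D r) s.
Proof.
move=> [e_sym e_irr] deg_D clique_r r_gt0; rewrite kcountE.
set A := cliques_in e setT s.+1.
have -> : #|A| * s.+1 = \sum_(S in A) #|S :&: setT|.
  by rewrite -sum_nat_const; apply: eq_bigr => S; rewrite !inE setIT => /and3P[_ /eqP->].
rewrite sum_card_setI -cardsT -sum_nat_const; apply: leq_sum => x _.
apply: leq_trans (card_cliques_through_le _ _ _ _) _.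
have nbhd_r : clique_num_le_in e (setT :&: nbhd e x) r.
  by apply: clique_num_le_in_nbhd => // S _; apply: clique_r.
apply: leq_trans (card_cliques_in_le_balanced e_sym e_irr s nbhd_r) _.
have := @elem_sym_le_balanced_sumn_le (balanced_parts #|setT :&: nbhd e x| r) D s.
by rewrite size_balanced_parts // sumn_balanced_parts setTI; apply; last exact: deg_D.
Qed.

Lemma sum_modn_eq r n j : j < r ->
  \sum_(i < n) (i %% r == j) = n %/ r + (j < n %% r).
Proof.
move=> lt_jr; have r_gt0 : 0 < r by apply: leq_ltn_trans lt_jr.
elim: n => [|n IH]; first by rewrite big_ord0 div0n mod0n.
rewrite big_ord_recr /= IH divnS // modnS.
have := ltn_pmod n r_gt0; case: ifP => [/dvdnP[k Ek] _ | _ lt_nr].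
  have -> : n %% r = r.-1.
    have k_gt0 : 0 < k by move: Ek; case: k.
    by rewrite (_ : n = k.-1 * r + r.-1) ?modnMDl ?modn_small ?prednK //; nia.
  by rewrite ltn0; lia.
by rewrite ltnS; lia.
Qed.

Section TuranGraph.
Variables (D r : nat).
Hypothesis r_gt0 : 0 < r.

Definition turan_part (j : nat) : {set 'I_D} := [set x : 'I_D | x %% r == j].

Lemma card_turan_part j : j < r -> #|turan_part j| = D %/ r + (j < D %% r).
Proof.
move=> lt_jr; rewrite -(sum_modn_eq D lt_jr) -sum1_card big_mkcond.
by apply: eq_bigr => i _; rewrite inE.
Qed.

Lemma turan_parts_balanced : [seq #|turan_part j| | j <- iota 0 r] = balanced_parts D r.
Proof.
have le_mr : D %% r <= r by rewrite ltnW // ltn_pmod.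
rewrite /balanced_parts -{1}(subnKC le_mr) iotaD map_cat add0n.
congr (_ ++ _).
  rewrite -[X in nseq X](size_iota 0 (D %% r)) -(size_map (fun j => #|turan_part j|)).
  apply/all_pred1P/allP => _ /mapP[j + ->]; rewrite mem_iota /= => lt_jm.
  by rewrite /= card_turan_part ?lt_jm ?addn1 // (leq_trans lt_jm).
rewrite -[X in nseq X](size_iota (D %% r) (r - D %% r)).
rewrite -(size_map (fun j => #|turan_part j|)).
apply/all_pred1P/allP => _ /mapP[j + ->]; rewrite mem_iota subnKC // => /andP[le_mj lt_jr].
by rewrite /= card_turan_part // ltnNge le_mj addn0.
Qed.

Lemma card_cliques_turan_prefix j s :
  #|cliques_in (turan_rel D r) [set x : 'I_D | x %% r < j] s| =
    elem_sym [seq #|turan_part i| | i <- iota 0 j] s.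
Proof.
elim: j s => [|j IH] [|s]; rewrite ?card_cliques_in0 ?elem_sym0 //.
  rewrite (@card_cliques_in_eq0 _ _ _ 0) // => S /subset_leq_card le_S _.
  by apply: leq_trans le_S _; rewrite leqn0 cards_eq0; apply/eqP/setP => x; rewrite !inE ltn0.
have turan_sym : symmetric (turan_rel D r) by move=> x y; rewrite /turan_rel eq_sym.
have prefixD :
    [set x : 'I_D | x %% r < j.+1] :\: turan_part j = [set x : 'I_D | x %% r < j].
  by apply/setP => x; rewrite !inE ltnS leq_eqVlt; case: ltngtP.
rewrite (@card_cliques_in_join _ _ turan_sym _ (turan_part j)).
- rewrite prefixD !IH -[j.+1]addn1 iotaD map_cat.
  by rewrite (elem_sym_perm (permEl (perm_catC _ _))).
- by apply/subsetP => x; rewrite !inE => /eqP->.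
- by move=> x y; rewrite !inE /turan_rel => /eqP-> /eqP->; rewrite eqxx.
- by move=> x y; rewrite prefixD !inE /turan_rel => /eqP-> lt_yj; rewrite gtn_eqF.
Qed.

Lemma kcount_turan_rel s : kcount (turan_rel D r) s = elem_sym (balanced_parts D r) s.
Proof.
rewrite kcountE -turan_parts_balanced -card_cliques_turan_prefix.
by congr #|cliques_in _ _ _|; apply/setP => x; rewrite !inE ltn_pmod.
Qed.
End TuranGraph.

Lemma elem_sym_nseq_cat a b c s :
  elem_sym (nseq b a.+1 ++ nseq c a) s =
    \sum_(k < b.+1 | k <= s) 'C(b, k) * 'C(c, s - k) * (a + 1) ^ k * a ^ (s - k).
Proof.
rewrite elem_sym_cat;
rewrite (big_ord_widen (b + s).+1 (fun k => elem_sym _ k * elem_sym _ (s - k)));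
  last by rewrite ltnS leq_addl.
rewrite (@big_ord_widen_cond _ _ _ b.+1 (b + s).+1 (fun k => k <= s)
  (fun k => 'C(b, k) * 'C(c, s - k) * (a + 1) ^ k * a ^ (s - k)));
  last by rewrite ltnS leq_addr.
rewrite big_mkcond [RHS]big_mkcond.
apply: eq_bigr => k _; rewrite !elem_sym_nseq addn1 !ltnS.
case: (leqP k s) => //= le_ks; case: (leqP k b) => [_ | lt_bk]; last by rewrite bin_small.
by rewrite -!mulnA (mulnCA (a.+1 ^ k)).
Qed.

Import Order.TTheory GRing.Theory Num.Theory.

Theorem mainTheorem4 (t D w a b : nat) :
  2 <= t -> 2 <= D -> 2 <= w ->
  D = a * (w - 1) + b -> b < w - 1 ->
  (forall (V : finType) (e : rel V),
      simple_graph e -> 0 < #|V| -> maxdeg_le e D -> clique_num_le e w ->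
      (rho e t <= (kcount (turan_rel D (w - 1)%N) (t - 1)%N)%:R / t%:R)%R)
  /\
  kcount (turan_rel D (w - 1)) (t - 1) =
    \sum_(k < b.+1 | k <= t - 1)
       'C(b, k) * 'C(w - 1 - b, t - 1 - k) * (a + 1) ^ k * a ^ (t - 1 - k).
Proof.
move=> t_ge2 _ w_ge2 D_ab lt_b_w1.
have r_gt0 : 0 < w - 1 by rewrite subn_gt0.
rewrite kcount_turan_rel //; split; last first.
  rewrite D_ab (elem_sym_perm (perm_balanced_partsE _ r_gt0 (ltnW lt_b_w1))).
  exact: elem_sym_nseq_cat.
move=> V e G V_gt0 deg_D clique_w.
have t_gt0 : (0 < t%:R :> rat)%R by rewrite ltr0n; lia.
rewrite /rho ler_pdivrMr ?ltr0n // mulrAC ler_pdivlMr //.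
rewrite -!natrM ler_nat [X in _ <= X]mulnC.
have [t_eq w_eq] : (t - 1).+1 = t /\ (w - 1).+1 = w by lia.
by have := @kcount_mul_le _ _ D (w - 1) (t - 1) G deg_D; rewrite t_eq w_eq; apply.
Qed.
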